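(* Under the standing assumptions of the context, for any real $a<b$, $\|\widehat{\varphi_l}\,'-\widehat{\varphi^M}\,'\|_{C[a,b]}=O(\mu(l))$ as $l\to\infty$, where $'$ denotes differentiation in $\omega$ and $\|\cdot\|_{C[a,b]}$ is the sup norm on $[a,b]$.
   Context: Fourier transform: $\widehat f(\omega)=\int_{\mathbb{R}}f(t)e^{-it\omega}\,dt$. Let $\theta$ be odd, non-decreasing, $C^2$, with $\theta(\omega)=\pi/4$ for $\omega>\pi/3$; fix $\pi/3\le\omega_0<\pi/2$. Meyer scaling function: $\widehat{\varphi^M}(\omega)=1$ for $|\omega|\le2\omega_0$, $=\cos(\frac\pi4+\theta(\frac{\pi}{3(\pi-2\omega_0)}(|\omega|-\pi)))$ for $2\omega_0<|\omega|\le2\pi-2\omega_0$, $=0$ otherwise. Meyer mask: $2\pi$-periodic $m^M$ with $m^M(\omega)=\widehat{\varphi^M}(2\omega)$ on $[-\pi,\pi]$. $\|\cdot\|_C$: sup norm on $[-\pi,\pi]$. A linear method of summation $(\lambda_{n,k})$ maps $f$ with Fourier coefficients $a_k,b_k$ to $u_n(f,\omega)=\frac{a_0}2+\sum_{k=1}^n\lambda_{n,k}(a_k\cos k\omega+b_k\sin k\omega)$. $m^M_l:=m^M/(\cos\frac\omega2)^{2l}$. Standing assumptions: a method and a sequence $n(l)$ are fixed with $u_l:=u_{n(l)}(m^M_l,\cdot)$, $u_{1,l}:=u_{n(l)}((m^M_l)',\cdot)$ satisfying $\alpha(l):=\|u_l-m^M_l\|_C=o(l^{-1})$, $\gamma(l):=\|u_{1,l}-(m^M_l)'\|_C=o(1)$,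 $u_l(\pi)\ne0$; $l_0$ is fixed with $\inf_{l\ge l_0}|u_l(0)|>0$ and $l\ge l_0$. $\mu(l):=l\alpha(l)+\gamma(l)$. $m_l(\omega):=(\cos\frac\omega2)^{2l}u_l(\omega)/u_l(0)$, $\widehat{\varphi_l}(\omega):=\prod_{j\ge1}m_l(\omega2^{-j})$. *)

From Stdlib Require Import Reals Lra.
From Coquelicot Require Import Coquelicot.
Open Scope R_scope.

Definition phiM (theta : R -> R) (w0 : R) (w : R) : R :=
  if Rle_dec (Rabs w) (2 * w0) then 1
  else if Rle_dec (Rabs w) (2 * PI - 2 * w0) then
    cos (PI / 4 + theta (PI / (3 * (PI - 2 * w0)) * (Rabs w - PI)))
  else 0.

(* reduction of w to [-pi, pi) modulo 2 pi *)
Definition red2pi (w : R) : R :=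
  w - 2 * PI * IZR (up ((w - PI) / (2 * PI))).

(* Meyer mask: the 2pi-periodic function equal to phiM(2w) on [-pi,pi). *)
Definition mM (theta : R -> R) (w0 : R) (w : R) : R :=
  phiM theta w0 (2 * red2pi w).

Definition mMl (theta : R -> R) (w0 : R) (l : nat) (w : R) : R :=
  mM theta w0 w / (cos (w / 2)) ^ (2 * l).

Definition fourier_a (f : R -> R) (k : nat) : R :=
  / PI * RInt (fun t => f t * cos (INR k * t)) (- PI) PI.
Definition fourier_b (f : R -> R) (k : nat) : R :=
  / PI * RInt (fun t => f t * sin (INR k * t)) (- PI) PI.

Fixpoint sum1 (g : nat -> R) (n : nat) : R :=
  match n with O => 0 | S m => sum1 g m + g (S m) end.

Fixpoint prod1 (g : nat -> R) (n : nat) : R :=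
  match n with O => 1 | S m => prod1 g m * g (S m) end.

(* linear method of summation (lambda_{n,k}) applied to f *)
Definition usum (lam : nat -> nat -> R) (n : nat) (f : R -> R) (w : R) : R :=
  fourier_a f 0 / 2 +
  sum1 (fun k => lam n k * (fourier_a f k * cos (INR k * w)
                            + fourier_b f k * sin (INR k * w))) n.

Definition supnorm (a b : R) (f : R -> R) : R :=
  real (Lub_Rbar (fun y => exists x, a <= x <= b /\ y = Rabs (f x))).

Section Std.
Variables (theta : R -> R) (w0 : R) (lam : nat -> nat -> R) (nl : nat -> nat).

Definition u_l (l : nat) : R -> R := usum lam (nl l) (mMl theta w0 l).
Definition u1_l (l : nat) : R -> R :=
  usum lam (nl l) (Derive (mMl theta w0 l)).
Definition alpha (l : nat) : R :=
  supnorm (- PI) PI (fun w => u_l l w - mMl theta w0 l w).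
Definition gamma (l : nat) : R :=
  supnorm (- PI) PI (fun w => u1_l l w - Derive (mMl theta w0 l) w).
Definition mu (l : nat) : R := INR l * alpha l + gamma l.
Definition m_l (l : nat) (w : R) : R :=
  (cos (w / 2)) ^ (2 * l) * u_l l w / u_l l 0.
(* infinite product prod_{j>=1} m_l(w 2^{-j}) as limit of partial products *)
Definition phi_l (l : nat) (w : R) : R :=
  real (Lim_seq (fun N => prod1 (fun j => m_l l (w / 2 ^ j)) N)).
End Std.

From Stdlib Require Import Reals Lra Lia ZArith.
From Coquelicot Require Import Coquelicot.
Open Scope R_scope.

(* Write [f = m_l] and [g = mM]. Both are C^1 with [f 0 = g 0 = 1] and [|f' - g'| <= kappa mu(l)]
   uniformly: expanding [m_l' - mM'] through [mM = cos^(2l) (x/2) mMl] leaves the errors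
   [u_l - mMl] (multiplied by [l]), [u_l' - mMl'] and [1 - u_l(0)], where [u_l'] is the summation
   method applied to [mMl'] because [mMl] vanishes at [+-pi].
   The partial products [P_N w = prod_(j<=N) f (w/2^j)] and their derivatives satisfy recursive
   inequalities [X_(N+1) <= X_N (1 + c/2^(N+1)) + K/2^(N+1)], hence stay below [e^c K]. This gives
   uniform convergence on bounded sets, so [phi_l'] is the limit of [P_N'], and a bound on
   [P_N' - Q_N'] linear in [sup |f' - g'|], where [Q_N] are the partial products of [g]. Finally
   [phiM = 1] near [0], so by the refinement equation [phiM w = mM (w/2) phiM (w/2)] it coincides
   with [Q_N] near [w] once [N] is large. *)

Lemma pow2_pos (j : nat) : 0 < 2 ^ j.
Proof. apply pow_lt; lra. Qed.

Lemma inv_pow2_S N : / 2 ^ S N = / 2 ^ N / 2.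
Proof. simpl. assert (H := pow2_pos N). field. lra. Qed.

Lemma pow2_ge_succ N : INR N + 1 <= 2 ^ N.
Proof.
  induction N as [|N IH]; [simpl; lra|].
  rewrite S_INR. simpl. assert (H := pow_R1_Rle 2 N ltac:(lra)). lra.
Qed.

Lemma Rabs_div_pow2 w k : Rabs (w / 2 ^ k) = Rabs w / 2 ^ k.
Proof.
  unfold Rdiv. rewrite Rabs_mult, Rabs_inv, (Rabs_pos_eq (2 ^ k)); auto.
  left; apply pow2_pos.
Qed.

Lemma PI_gt3 : 3 < PI.
Proof. assert (H := PI2_3_2). lra. Qed.

Lemma exp_le_compat x y : x <= y -> exp x <= exp y.
Proof. intros [H|H]; [left; apply exp_increasing | right; subst]; auto. Qed.

Lemma is_derive_cst (k x : R) : is_derive (fun _ => k) x 0.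
Proof. auto_derive; auto. Qed.

Lemma continuous_Rmult (f g : R -> R) x :
  continuous f x -> continuous g x -> continuous (fun y => f y * g y) x.
Proof. intros; apply (continuous_mult f g x); auto. Qed.
Lemma continuous_Rplus (f g : R -> R) x :
  continuous f x -> continuous g x -> continuous (fun y => f y + g y) x.
Proof. intros; apply (continuous_plus f g x); auto. Qed.
Lemma continuous_Rminus (f g : R -> R) x :
  continuous f x -> continuous g x -> continuous (fun y => f y - g y) x.
Proof. intros; apply (continuous_minus f g x); auto. Qed.
Lemma continuous_Rcomp (f g : R -> R) x :
  continuous f x -> continuous g (f x) -> continuous (fun y => g (f y)) x.
Proof. intros; apply (continuous_comp f g x); auto. Qed.
Lemma continuous_Rconst (k x : R) : continuous (fun _ : R => k) x.
Proof. apply continuous_const. Qed.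
Lemma ex_derive_continuous_R (f : R -> R) x : ex_derive f x -> continuous f x.
Proof. intros H. apply (ex_derive_continuous (K:=R_AbsRing) (V:=R_NormedModule)). exact H. Qed.

Lemma ball_R (x e y : R) : ball x e y <-> Rabs (y - x) < e.
Proof. reflexivity. Qed.

Lemma locally_gt (a x : R) : a < x -> locally x (fun y => a < y).
Proof. apply open_gt. Qed.
Lemma locally_lt (a x : R) : x < a -> locally x (fun y => y < a).
Proof. apply open_lt. Qed.

Lemma locally_dist_lt (x d : R) : 0 < d -> locally x (fun y => Rabs (y - x) < d).
Proof. intros H. exists (mkposreal d H). intros y Hy. apply ball_R, Hy. Qed.

Lemma locally_Rabs_lt (w T : R) : Rabs w < T -> locally w (fun y => Rabs y < T).
Proof.
  intros H. apply (filter_imp (fun y => Rabs (y - w) < T - Rabs w)).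
  - intros y Hy. replace y with ((y - w) + w) by ring.
    eapply Rle_lt_trans; [apply Rabs_triang | lra].
  - apply locally_dist_lt. lra.
Qed.

Lemma locally_neq_0 (f : R -> R) x : continuous f x -> f x <> 0 -> locally x (fun y => f y <> 0).
Proof.
  intros Hc Hx. assert (He : 0 < Rabs (f x)) by (apply Rabs_pos_lt; auto).
  apply filterlim_locally with (eps := mkposreal _ He) in Hc.
  eapply filter_imp; [|exact Hc]. intros y Hy Hy0.
  change (Rabs (f y - f x) < Rabs (f x)) in Hy.
  rewrite Hy0, Rabs_minus_sym, Rminus_0_r in Hy. lra.
Qed.

Lemma continuous_eq_right_const (f : R -> R) (x0 k : R) :
  continuous f x0 -> (forall y, x0 < y -> f y = k) -> f x0 = k.
Proof.
  intros Hc Hk. destruct (Req_dec (f x0) k) as [|Hne]; auto. exfalso.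
  assert (He : 0 < Rabs (f x0 - k)) by (apply Rabs_pos_lt; lra).
  apply filterlim_locally with (eps := mkposreal _ He) in Hc.
  destruct Hc as [d Hd].
  assert (Hy : ball x0 d (x0 + d / 2)).
  { apply ball_R. replace (x0 + d/2 - x0) with (d/2) by ring. assert (H := cond_pos d).
    rewrite Rabs_pos_eq; lra. }
  specialize (Hd _ Hy). change (Rabs (f (x0 + d / 2) - f x0) < Rabs (f x0 - k)) in Hd.
  rewrite Hk, Rabs_minus_sym in Hd by (assert (H := cond_pos d); lra). lra.
Qed.

Lemma is_derive_locally_eq (F G G' : R -> R) x :
  locally x (fun y => F y = G y) -> locally x (fun y => is_derive G y (G' y)) ->
  continuous G' x ->
  is_derive F x (G' x) /\ continuous (Derive F) x /\ locally x (fun y => Derive F y = G' y).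
Proof.
  intros H1 H2 H3.
  assert (H4 : locally x (fun y => is_derive F y (G' y))).
  { apply locally_locally in H1.
    eapply filter_imp; [|exact (filter_and _ _ H1 H2)].
    intros y [Hy1 Hy2]. eapply is_derive_ext_loc; [|exact Hy2].
    eapply filter_imp; [|exact Hy1]. intros z Hz. auto. }
  assert (H5 : locally x (fun y => Derive F y = G' y)).
  { eapply filter_imp; [|exact H4]. intros y Hy. apply is_derive_unique, Hy. }
  split; [|split; [|exact H5]].
  - apply locally_singleton in H4. exact H4.
  - eapply continuous_ext_loc; [|exact H3]. eapply filter_imp; [|exact H5]. auto.
Qed.

Lemma lipschitz_at_0 (f f' : R -> R) B x :
  (forall x, is_derive f x (f' x)) -> (forall x, Rabs (f' x) <= B) ->
  Rabs (f x - f 0) <= B * Rabs x.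
Proof.
  intros Hd Hb. replace (Rabs x) with (Rabs (x - 0)) by (f_equal; ring).
  apply (bounded_variation f f'). intros t _. split; auto.
Qed.

Definition dyadic_prod (f : R -> R) (N : nat) (w : R) : R := prod1 (fun j => f (w / 2 ^ j)) N.

Fixpoint dyadic_prod_der (f f' : R -> R) (N : nat) (w : R) : R :=
  match N with
  | O => 0
  | S m => dyadic_prod_der f f' m w * f (w / 2 ^ S m)
           + dyadic_prod f m w * (f' (w / 2 ^ S m) / 2 ^ S m)
  end.

Lemma dyadic_prod_S f N w : dyadic_prod f (S N) w = dyadic_prod f N w * f (w / 2 ^ S N).
Proof. reflexivity. Qed.

Lemma dyadic_prod_der_S f f' N w :
  dyadic_prod_der f f' (S N) w =
  dyadic_prod_der f f' N w * f (w / 2 ^ S N) + dyadic_prod f N w * (f' (w / 2 ^ S N) / 2 ^ S N).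
Proof. reflexivity. Qed.

Lemma is_derive_comp_div_pow2 (f f' : R -> R) (k : nat) (w : R) :
  (forall x, is_derive f x (f' x)) ->
  is_derive (fun w => f (w / 2 ^ k)) w (f' (w / 2 ^ k) / 2 ^ k).
Proof.
  intros Hf. assert (H2 := pow2_pos k).
  replace (f' (w / 2 ^ k) / 2 ^ k) with (scal (/ 2 ^ k) (f' (w / 2 ^ k)))
    by (unfold scal; simpl; unfold mult; simpl; field; lra).
  apply (is_derive_comp f (fun w => w / 2 ^ k)); [apply Hf|].
  auto_derive; [auto | ring].
Qed.

Lemma continuous_comp_div_pow2 (h : R -> R) k x :
  (forall y, continuous h y) -> continuous (fun w => h (w / 2 ^ k)) x.
Proof.
  intros Hh. apply continuous_Rcomp; auto. apply ex_derive_continuous_R. auto_derive. auto.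
Qed.

Section DyadicProductDerivative.
Variables f f' : R -> R.
Hypothesis Hf : forall x, is_derive f x (f' x).

Lemma is_derive_dyadic_prod N w : is_derive (dyadic_prod f N) w (dyadic_prod_der f f' N w).
Proof.
  induction N as [|N IH].
  - apply is_derive_cst.
  - apply (is_derive_mult (dyadic_prod f N) (fun w => f (w / 2 ^ S N))); auto.
    + apply is_derive_comp_div_pow2, Hf.
    + intros; apply Rmult_comm.
Qed.

Lemma Derive_dyadic_prod N w : Derive (dyadic_prod f N) w = dyadic_prod_der f f' N w.
Proof. apply is_derive_unique, is_derive_dyadic_prod. Qed.

Lemma continuous_dyadic_prod_der N x :
  (forall y, continuous f' y) -> continuous (dyadic_prod_der f f' N) x.
Proof.
  intros Hf'. induction N as [|N IH]; [apply continuous_Rconst|].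
  apply (continuous_ext (fun y => dyadic_prod_der f f' N y * f (y / 2 ^ S N)
                               + dyadic_prod f N y * (f' (y / 2 ^ S N) / 2 ^ S N)));
    [reflexivity|].
  apply continuous_Rplus; apply continuous_Rmult; auto.
  - apply continuous_comp_div_pow2. intros y. apply ex_derive_continuous_R. eexists; eauto.
  - apply ex_derive_continuous_R. eexists. apply is_derive_dyadic_prod.
  - apply continuous_Rmult; [apply continuous_comp_div_pow2; auto | apply continuous_Rconst].
Qed.
End DyadicProductDerivative.

Definition dyadic_growth (c : R) (N : nat) : R := prod1 (fun j => 1 + c / 2 ^ j) N.

Lemma dyadic_growth_S c N : dyadic_growth c (S N) = dyadic_growth c N * (1 + c / 2 ^ S N).
Proof. reflexivity. Qed.

Lemma dyadic_growth_ge1 c N : 0 <= c -> 1 <= dyadic_growth c N.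
Proof.
  intros Hc. induction N as [|N IH]; [unfold dyadic_growth; simpl; lra|].
  assert (0 <= c / 2 ^ S N) by (apply Rdiv_le_0_compat; [lra | apply pow2_pos]).
  rewrite dyadic_growth_S. nra.
Qed.

(* [1 + x <= exp x] and the geometric series [sum c / 2^j <= c]. *)
Lemma dyadic_growth_le_exp c N : 0 <= c -> dyadic_growth c N <= exp c.
Proof.
  intros Hc. apply Rle_trans with (exp (c * (1 - / 2 ^ N))).
  - induction N as [|N IH].
    + unfold dyadic_growth; simpl. replace (c * (1 - / 1)) with 0 by field.
      rewrite exp_0. lra.
    + rewrite dyadic_growth_S.
      replace (c * (1 - / 2 ^ S N)) with (c * (1 - / 2 ^ N) + c / 2 ^ S N)
        by (unfold Rdiv; rewrite inv_pow2_S; set (a := / 2 ^ N); field).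
      rewrite exp_plus.
      assert (H1 := exp_ineq1_le (c / 2 ^ S N)).
      assert (0 <= c / 2 ^ S N) by (apply Rdiv_le_0_compat; [lra | apply pow2_pos]).
      assert (H3 := dyadic_growth_ge1 c N Hc).
      apply Rmult_le_compat; lra.
  - apply exp_le_compat.
    assert (H := Rinv_0_lt_compat _ (pow2_pos N)). nra.
Qed.

Lemma dyadic_recursion_bound (X : nat -> R) (c K : R) :
  0 <= c -> 0 <= K -> X 0%nat <= 0 ->
  (forall N, X (S N) <= X N * (1 + c / 2 ^ S N) + K / 2 ^ S N) ->
  forall N, X N <= exp c * K.
Proof.
  intros Hc HK H0 HS N.
  assert (Hrec : X N <= dyadic_growth c N * K * (1 - / 2 ^ N)).
  { induction N as [|N IH].
    - simpl. replace (1 - / 1) with 0 by field. lra.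
    - eapply Rle_trans; [apply HS|].
      assert (Hp : 0 < 2 ^ S N) by apply pow2_pos.
      assert (H1 : 0 <= c / 2 ^ S N) by (apply Rdiv_le_0_compat; lra).
      assert (HG := dyadic_growth_ge1 c N Hc).
      rewrite dyadic_growth_S, inv_pow2_S. unfold Rdiv at 2. rewrite inv_pow2_S.
      assert (Ha0 : 0 < / 2 ^ N) by (apply Rinv_0_lt_compat, pow2_pos).
      set (a := / 2 ^ N) in *. clearbody a.
      assert (X N * (1 + c / 2 ^ S N) <= dyadic_growth c N * K * (1 - a) * (1 + c / 2 ^ S N))
        by (apply Rmult_le_compat_r; lra).
      assert (K * (a / 2) <= dyadic_growth c N * (1 + c / 2 ^ S N) * K * (a / 2)).
      { assert (0 <= K * (a / 2)) by nra.
        assert (1 <= dyadic_growth c N * (1 + c / 2 ^ S N)) by nra. nra. }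
      replace (dyadic_growth c N * (1 + c / 2 ^ S N) * K * (1 - a / 2)) with
        (dyadic_growth c N * K * (1 - a) * (1 + c / 2 ^ S N)
         + dyadic_growth c N * (1 + c / 2 ^ S N) * K * (a / 2)) by (field; lra).
      lra. }
  eapply Rle_trans; [exact Hrec|].
  assert (HP := dyadic_growth_le_exp c N Hc). assert (H1 := dyadic_growth_ge1 c N Hc).
  assert (0 < / 2 ^ N) by (apply Rinv_0_lt_compat, pow2_pos).
  assert (0 <= dyadic_growth c N * K) by nra.
  apply Rle_trans with (dyadic_growth c N * K); [nra|].
  apply Rmult_le_compat_r; lra.
Qed.

Lemma telescope_dyadic_le (u : nat -> R) K :
  0 <= K -> (forall N, Rabs (u (S N) - u N) <= K / 2 ^ S N) ->
  forall N n, (N <= n)%nat -> Rabs (u n - u N) <= K / 2 ^ N.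
Proof.
  intros HK Hstep N n Hn.
  assert (Htel : Rabs (u n - u N) <= K * (/ 2 ^ N - / 2 ^ n)).
  { induction Hn as [|n Hn IH].
    - rewrite Rminus_eq_0, Rabs_R0. right; ring.
    - replace (u (S n) - u N) with ((u (S n) - u n) + (u n - u N)) by ring.
      eapply Rle_trans; [apply Rabs_triang|].
      replace (K * (/ 2 ^ N - / 2 ^ S n)) with (K / 2 ^ S n + K * (/ 2 ^ N - / 2 ^ n))
        by (unfold Rdiv; rewrite inv_pow2_S; set (a := / 2 ^ n); set (b := / 2 ^ N); field).
      apply Rplus_le_compat; auto. }
  assert (0 < / 2 ^ n) by (apply Rinv_0_lt_compat, pow2_pos).
  unfold Rdiv. nra.
Qed.

Lemma CVU_cauchy_dyadic_steps (u : nat -> R -> R) (D : R -> Prop) K :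
  0 <= K -> (forall N y, D y -> Rabs (u (S N) y - u N y) <= K / 2 ^ S N) ->
  CVU_cauchy u D.
Proof.
  intros HK H eps.
  destruct (nfloor_ex (2 * K / eps)) as [n Hn].
  { apply Rdiv_le_0_compat; [lra | apply cond_pos]. }
  exists (S n). intros p q y Dy Hp Hq.
  assert (H1 := telescope_dyadic_le (fun N => u N y) K HK (fun N => H N y Dy) (S n) p Hp).
  assert (H2 := telescope_dyadic_le (fun N => u N y) K HK (fun N => H N y Dy) (S n) q Hq).
  cbv beta in H1, H2.
  replace (u p y - u q y) with ((u p y - u (S n) y) - (u q y - u (S n) y)) by ring.
  eapply Rle_lt_trans; [apply Rabs_triang|]. rewrite Rabs_Ropp.
  assert (H3 := pow2_ge_succ (S n)). rewrite S_INR in H3.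
  assert (He := cond_pos eps). assert (H6 := pow2_pos (S n)).
  assert (H5 : 2 * K < eps * 2 ^ S n).
  { apply (Rmult_lt_reg_r (/ eps)); [apply Rinv_0_lt_compat; lra|].
    replace (eps * 2 ^ S n * / eps) with (2 ^ S n) by (field; lra). unfold Rdiv in Hn. lra. }
  assert (K / 2 ^ S n + K / 2 ^ S n < eps).
  { apply (Rmult_lt_reg_r (2 ^ S n)); auto.
    replace ((K / 2 ^ S n + K / 2 ^ S n) * 2 ^ S n) with (2 * K) by (field; lra). lra. }
  lra.
Qed.

Section DyadicComparison.
Variables (f f' g g' : R -> R) (B G eps : R).
Hypothesis Hf : forall x, is_derive f x (f' x).
Hypothesis Hf'b : forall x, Rabs (f' x) <= B.
Hypothesis Hf0 : f 0 = 1.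
Hypothesis Hg : forall x, is_derive g x (g' x).
Hypothesis Hgb : forall x, Rabs (g x) <= 1.
Hypothesis Hg'b : forall x, Rabs (g' x) <= G.
Hypothesis Hg0 : g 0 = 1.
Hypothesis Hf'g' : forall x, Rabs (f' x - g' x) <= eps.
Hypothesis HB : 0 <= B.
Hypothesis Heps : 0 <= eps.

Lemma Rabs_f_sub_1_le x : Rabs (f x - 1) <= B * Rabs x.
Proof. rewrite <- Hf0. apply (lipschitz_at_0 f f'); auto. Qed.

Lemma Rabs_f_sub_g_le x : Rabs (f x - g x) <= eps * Rabs x.
Proof.
  replace (f x - g x) with ((fun t => f t - g t) x - (fun t => f t - g t) 0)
    by (simpl; rewrite Hf0, Hg0; ring).
  apply (lipschitz_at_0 (fun t => f t - g t) (fun t => f' t - g' t)); auto.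
  intros t. apply (is_derive_minus f g t (f' t) (g' t)); auto.
Qed.

Lemma Rabs_f_dyadic_le w N : Rabs (f (w / 2 ^ S N)) <= 1 + B * Rabs w / 2 ^ S N.
Proof.
  replace (f (w / 2 ^ S N)) with ((f (w / 2 ^ S N) - 1) + 1) by ring.
  eapply Rle_trans; [apply Rabs_triang|]. rewrite Rabs_R1.
  assert (H := Rabs_f_sub_1_le (w / 2 ^ S N)). rewrite Rabs_div_pow2 in H.
  unfold Rdiv in *. lra.
Qed.

Lemma Rabs_dyadic_prod_f_le w N : Rabs (dyadic_prod f N w) <= exp (B * Rabs w).
Proof.
  apply Rle_trans with (dyadic_growth (B * Rabs w) N);
    [|apply dyadic_growth_le_exp, Rmult_le_pos; auto using Rabs_pos].
  induction N as [|N IH].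
  - unfold dyadic_prod, dyadic_growth; simpl. rewrite Rabs_R1. lra.
  - rewrite dyadic_prod_S, dyadic_growth_S, Rabs_mult.
    apply Rmult_le_compat; auto using Rabs_pos. apply Rabs_f_dyadic_le.
Qed.

Lemma Rabs_dyadic_prod_g_le w N : Rabs (dyadic_prod g N w) <= 1.
Proof.
  induction N as [|N IH].
  - unfold dyadic_prod; simpl. rewrite Rabs_R1. lra.
  - rewrite dyadic_prod_S, Rabs_mult. rewrite <- (Rmult_1_r 1).
    apply Rmult_le_compat; auto using Rabs_pos.
Qed.

Lemma Rabs_dyadic_prod_der_f_le w N :
  Rabs (dyadic_prod_der f f' N w) <= exp (B * Rabs w) * (exp (B * Rabs w) * B).
Proof.
  assert (Hc : 0 <= B * Rabs w) by (apply Rmult_le_pos; auto using Rabs_pos).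
  assert (HE := exp_ineq1_le (B * Rabs w)).
  apply (dyadic_recursion_bound (fun N => Rabs (dyadic_prod_der f f' N w))); auto.
  - nra.
  - simpl. rewrite Rabs_R0. lra.
  - intros n. rewrite dyadic_prod_der_S.
    eapply Rle_trans; [apply Rabs_triang|]. rewrite !Rabs_mult.
    apply Rplus_le_compat.
    + apply Rmult_le_compat_l; [apply Rabs_pos|].
      assert (H := Rabs_f_dyadic_le w n). unfold Rdiv in *. lra.
    + rewrite Rabs_div_pow2. unfold Rdiv. rewrite <- Rmult_assoc.
      assert (0 < / 2 ^ S n) by (apply Rinv_0_lt_compat, pow2_pos).
      apply Rmult_le_compat_r; [lra|].
      apply Rmult_le_compat; auto using Rabs_pos, Rabs_dyadic_prod_f_le.
Qed.

Lemma Rabs_dyadic_prod_der_g_le w N : Rabs (dyadic_prod_der g g' N w) <= G.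
Proof.
  rewrite <- (Rmult_1_l G), <- exp_0.
  apply (dyadic_recursion_bound (fun N => Rabs (dyadic_prod_der g g' N w))).
  - lra.
  - eapply Rle_trans; [apply Rabs_pos | apply (Hg'b 0)].
  - simpl. rewrite Rabs_R0. lra.
  - intros n. rewrite dyadic_prod_der_S.
    eapply Rle_trans; [apply Rabs_triang|]. rewrite !Rabs_mult.
    unfold Rdiv. rewrite Rmult_0_l, Rplus_0_r, Rmult_1_r.
    apply Rplus_le_compat.
    + rewrite <- (Rmult_1_r (Rabs (dyadic_prod_der g g' n w))) at 2.
      apply Rmult_le_compat_l; auto using Rabs_pos.
    + rewrite Rabs_mult, Rabs_inv, (Rabs_pos_eq (2 ^ S n)) by (left; apply pow2_pos).
      assert (0 < / 2 ^ S n) by (apply Rinv_0_lt_compat, pow2_pos).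
      rewrite <- Rmult_assoc. apply Rmult_le_compat_r; [lra|].
      rewrite <- (Rmult_1_l G). apply Rmult_le_compat; auto using Rabs_pos, Rabs_dyadic_prod_g_le.
Qed.

Lemma Rabs_dyadic_prod_sub_le w N :
  Rabs (dyadic_prod f N w - dyadic_prod g N w) <= exp (B * Rabs w) * (eps * Rabs w).
Proof.
  apply (dyadic_recursion_bound (fun N => Rabs (dyadic_prod f N w - dyadic_prod g N w))).
  - apply Rmult_le_pos; auto using Rabs_pos.
  - apply Rmult_le_pos; auto using Rabs_pos.
  - unfold dyadic_prod; simpl. rewrite Rminus_eq_0, Rabs_R0. lra.
  - intros n. rewrite !dyadic_prod_S.
    set (x := w / 2 ^ S n).
    replace (dyadic_prod f n w * f x - dyadic_prod g n w * g x) with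
      ((dyadic_prod f n w - dyadic_prod g n w) * f x + dyadic_prod g n w * (f x - g x)) by ring.
    eapply Rle_trans; [apply Rabs_triang|]. rewrite !Rabs_mult.
    apply Rplus_le_compat.
    + apply Rmult_le_compat_l; [apply Rabs_pos|].
      apply Rabs_f_dyadic_le.
    + assert (H := Rabs_f_sub_g_le x). unfold x in H. rewrite Rabs_div_pow2 in H.
      replace (eps * Rabs w / 2 ^ S n) with (1 * (eps * (Rabs w / 2 ^ S n))) by (unfold Rdiv; ring).
      apply Rmult_le_compat; auto using Rabs_pos, Rabs_dyadic_prod_g_le.
Qed.

Definition dyadic_der_error (r : R) : R := G * (eps * r) + exp (B * r) * (eps * r) * B + eps.

Lemma Rabs_dyadic_prod_der_sub_le w N :
  Rabs (dyadic_prod_der f f' N w - dyadic_prod_der g g' N w)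
  <= exp (B * Rabs w) * dyadic_der_error (Rabs w).
Proof.
  assert (HW := Rabs_pos w). assert (HE := exp_ineq1_le (B * Rabs w)).
  assert (HG : 0 <= G) by (eapply Rle_trans; [apply Rabs_pos | apply (Hg'b 0)]).
  assert (0 <= B * Rabs w) by (apply Rmult_le_pos; auto).
  assert (0 <= eps * Rabs w) by (apply Rmult_le_pos; auto).
  apply (dyadic_recursion_bound (fun N => Rabs (dyadic_prod_der f f' N w - dyadic_prod_der g g' N w)));
    auto.
  - unfold dyadic_der_error. assert (0 <= exp (B * Rabs w) * (eps * Rabs w) * B).
    { apply Rmult_le_pos; [|auto]. apply Rmult_le_pos; lra. }
    nra.
  - simpl. rewrite Rminus_eq_0, Rabs_R0. lra.
  - intros n. rewrite !dyadic_prod_der_S.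
    set (x := w / 2 ^ S n).
    assert (Hi : 0 < / 2 ^ S n) by (apply Rinv_0_lt_compat, pow2_pos).
    replace (dyadic_prod_der f f' n w * f x + dyadic_prod f n w * (f' x / 2 ^ S n) -
       (dyadic_prod_der g g' n w * g x + dyadic_prod g n w * (g' x / 2 ^ S n))) with
      ((dyadic_prod_der f f' n w - dyadic_prod_der g g' n w) * f x +
       (dyadic_prod_der g g' n w * (f x - g x) +
        ((dyadic_prod f n w - dyadic_prod g n w) * f' x
         + dyadic_prod g n w * (f' x - g' x)) * / 2 ^ S n))
      by (unfold Rdiv; ring).
    eapply Rle_trans; [apply Rabs_triang|]. rewrite Rabs_mult.
    apply Rplus_le_compat.
    { apply Rmult_le_compat_l; [apply Rabs_pos|].
      apply Rabs_f_dyadic_le. }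
    eapply Rle_trans; [apply Rabs_triang|].
    assert (Hfg := Rabs_f_sub_g_le x). unfold x in Hfg. rewrite Rabs_div_pow2 in Hfg. fold x in Hfg.
    assert (h1 : Rabs (dyadic_prod_der g g' n w * (f x - g x)) <= G * (eps * (Rabs w / 2 ^ S n))).
    { rewrite Rabs_mult.
      apply Rmult_le_compat; auto using Rabs_pos, Rabs_dyadic_prod_der_g_le. }
    assert (h2 : Rabs ((dyadic_prod f n w - dyadic_prod g n w) * f' x
                       + dyadic_prod g n w * (f' x - g' x))
                 <= exp (B * Rabs w) * (eps * Rabs w) * B + eps).
    { eapply Rle_trans; [apply Rabs_triang|]. rewrite !Rabs_mult. apply Rplus_le_compat.
      - apply Rmult_le_compat; auto using Rabs_pos, Rabs_dyadic_prod_sub_le.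
      - rewrite <- (Rmult_1_l eps).
        apply Rmult_le_compat; auto using Rabs_pos, Rabs_dyadic_prod_g_le. }
    rewrite (Rabs_mult _ (/ 2 ^ S n)), (Rabs_pos_eq (/ 2 ^ S n)) by lra.
    apply Rmult_le_compat_r with (r := / 2 ^ S n) in h2; [|lra].
    replace (dyadic_der_error (Rabs w) / 2 ^ S n) with
      (G * (eps * (Rabs w / 2 ^ S n)) + (exp (B * Rabs w) * (eps * Rabs w) * B + eps) * / 2 ^ S n)
      by (unfold dyadic_der_error, Rdiv; ring).
    lra.
Qed.

Lemma exp_dyadic_der_error_le r r' :
  0 <= G -> 0 <= r <= r' -> exp (B * r) * dyadic_der_error r <= exp (B * r') * dyadic_der_error r'.
Proof.
  intros HG [Hr Hrr'].
  assert (HE : exp (B * r) <= exp (B * r')) by (apply exp_le_compat, Rmult_le_compat_l; auto).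
  assert (HE0 := exp_pos (B * r)).
  assert (Her : eps * r <= eps * r') by (apply Rmult_le_compat_l; auto).
  assert (0 <= eps * r) by (apply Rmult_le_pos; auto).
  assert (H1 : exp (B * r) * (eps * r) * B <= exp (B * r') * (eps * r') * B).
  { apply Rmult_le_compat_r; auto. apply Rmult_le_compat; lra. }
  assert (0 <= dyadic_der_error r).
  { unfold dyadic_der_error. assert (0 <= exp (B * r) * (eps * r) * B).
    { apply Rmult_le_pos; [apply Rmult_le_pos|]; lra. }
    nra. }
  apply Rmult_le_compat; [lra | auto | auto |].
  unfold dyadic_der_error. nra.
Qed.

Section DyadicLimit.
Variable R0 : R.
Let ER := exp (B * R0).

Lemma Rabs_dyadic_prod_f_step_le N y : Rabs y <= R0 ->
  Rabs (dyadic_prod f (S N) y - dyadic_prod f N y) <= ER * (B * R0) / 2 ^ S N.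
Proof.
  intros Hy. rewrite dyadic_prod_S.
  replace (dyadic_prod f N y * f (y / 2 ^ S N) - dyadic_prod f N y)
    with (dyadic_prod f N y * (f (y / 2 ^ S N) - 1)) by ring.
  replace (ER * (B * R0) / 2 ^ S N) with (ER * (B * (R0 / 2 ^ S N))) by (unfold Rdiv; ring).
  rewrite Rabs_mult. apply Rmult_le_compat; auto using Rabs_pos.
  - eapply Rle_trans; [apply Rabs_dyadic_prod_f_le|].
    apply exp_le_compat, Rmult_le_compat_l; auto.
  - eapply Rle_trans; [apply Rabs_f_sub_1_le|]. rewrite Rabs_div_pow2.
    apply Rmult_le_compat_l; auto. unfold Rdiv.
    apply Rmult_le_compat_r; [left; apply Rinv_0_lt_compat, pow2_pos | exact Hy].
Qed.

Lemma Rabs_dyadic_prod_der_f_step_le N y : Rabs y <= R0 ->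
  Rabs (dyadic_prod_der f f' (S N) y - dyadic_prod_der f f' N y)
  <= (ER * (ER * B) * (B * R0) + ER * B) / 2 ^ S N.
Proof.
  intros Hy. rewrite dyadic_prod_der_S.
  replace (dyadic_prod_der f f' N y * f (y / 2 ^ S N)
           + dyadic_prod f N y * (f' (y / 2 ^ S N) / 2 ^ S N) - dyadic_prod_der f f' N y)
    with (dyadic_prod_der f f' N y * (f (y / 2 ^ S N) - 1)
          + dyadic_prod f N y * f' (y / 2 ^ S N) * / 2 ^ S N) by (unfold Rdiv; ring).
  assert (Hi : 0 < / 2 ^ S N) by (apply Rinv_0_lt_compat, pow2_pos).
  assert (HEy : exp (B * Rabs y) <= ER) by (apply exp_le_compat, Rmult_le_compat_l; auto).
  assert (HEy0 := exp_pos (B * Rabs y)).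
  assert (HP := Rabs_dyadic_prod_f_le y N).
  assert (HdP := Rabs_dyadic_prod_der_f_le y N).
  assert (Hf1 := Rabs_f_sub_1_le (y / 2 ^ S N)). rewrite Rabs_div_pow2 in Hf1.
  assert (h1 : Rabs (dyadic_prod_der f f' N y * (f (y / 2 ^ S N) - 1))
               <= ER * (ER * B) * (B * R0 * / 2 ^ S N)).
  { assert (HdP' : Rabs (dyadic_prod_der f f' N y) <= ER * (ER * B)).
    { eapply Rle_trans; [exact HdP|].
      apply Rmult_le_compat; [lra | apply Rmult_le_pos; lra | lra |].
      apply Rmult_le_compat_r; auto. }
    assert (Hf1' : Rabs (f (y / 2 ^ S N) - 1) <= B * R0 * / 2 ^ S N).
    { eapply Rle_trans; [exact Hf1|]. unfold Rdiv. rewrite <- Rmult_assoc.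
      apply Rmult_le_compat_r; [lra|]. apply Rmult_le_compat_l; auto. }
    rewrite Rabs_mult. apply Rmult_le_compat; auto using Rabs_pos. }
  assert (h2 : Rabs (dyadic_prod f N y * f' (y / 2 ^ S N) * / 2 ^ S N) <= ER * B * / 2 ^ S N).
  { rewrite !Rabs_mult, (Rabs_pos_eq (/ 2 ^ S N)) by lra.
    apply Rmult_le_compat_r; [lra|].
    apply Rmult_le_compat; auto using Rabs_pos. lra. }
  eapply Rle_trans; [apply Rabs_triang|].
  replace ((ER * (ER * B) * (B * R0) + ER * B) / 2 ^ S N)
    with (ER * (ER * B) * (B * R0 * / 2 ^ S N) + ER * B * / 2 ^ S N) by (unfold Rdiv; ring).
  lra.
Qed.
End DyadicLimit.

Hypothesis Hf'c : forall x, continuous f' x.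

(* The partial products and their derivatives converge uniformly on bounded intervals. *)
Lemma is_derive_dyadic_limit w :
  is_derive (fun w => real (Lim_seq (fun N => dyadic_prod f N w))) w
    (real (Lim_seq (fun N => dyadic_prod_der f f' N w)))
  /\ is_lim_seq (fun N => dyadic_prod_der f f' N w) (real (Lim_seq (fun N => dyadic_prod_der f f' N w))).
Proof.
  set (R0 := Rabs w + 1). set (D := fun y => - R0 < y < R0).
  assert (HR0 : 0 <= R0) by (assert (H := Rabs_pos w); unfold R0; lra).
  assert (HER := exp_pos (B * R0)).
  assert (HD : forall y, D y -> Rabs y <= R0).
  { intros y [H1 H2]. unfold Rabs. destruct Rcase_abs; lra. }
  assert (HwD : D w) by (unfold D, R0, Rabs; destruct Rcase_abs; lra).
  assert (CP : CVU_dom (dyadic_prod f) D).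
  { apply CVU_dom_cauchy, (CVU_cauchy_dyadic_steps _ _ (exp (B * R0) * (B * R0))).
    - apply Rmult_le_pos; [lra | apply Rmult_le_pos; auto].
    - intros N y Dy. apply Rabs_dyadic_prod_f_step_le, HD, Dy. }
  assert (CdP : CVU_dom (fun N y => Derive (dyadic_prod f N) y) D).
  { apply CVU_dom_cauchy.
    apply (CVU_cauchy_dyadic_steps _ _
      (exp (B * R0) * (exp (B * R0) * B) * (B * R0) + exp (B * R0) * B)).
    - apply Rplus_le_le_0_compat; repeat apply Rmult_le_pos; lra.
    - intros N y Dy. rewrite !(Derive_dyadic_prod f f' Hf).
      apply Rabs_dyadic_prod_der_f_step_le, HD, Dy. }
  assert (Hder := CVU_Derive (dyadic_prod f) D
     ltac:(apply open_and; [apply open_gt | apply open_lt])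
     ltac:(intros a b x Da Db Hx; unfold D in *; lra) CP
     (fun n x _ => ex_intro _ _ (is_derive_dyadic_prod f f' Hf n x))
     (fun n x _ => proj2 (continuity_pt_filterlim _ _)
        (continuous_ext _ _ x (fun y => eq_sym (Derive_dyadic_prod f f' Hf n y))
           (continuous_dyadic_prod_der f f' Hf n x Hf'c)))
     CdP w HwD).
  assert (Hlim := Lim_seq_correct' _ (CVU_CVS_dom _ _ CdP w HwD)).
  cbv beta in Hder, Hlim.
  rewrite (Lim_seq_ext _ _ (fun n => Derive_dyadic_prod f f' Hf n w)) in Hder, Hlim.
  split; [exact Hder|].
  eapply is_lim_seq_ext; [|exact Hlim]. intros n. apply Derive_dyadic_prod, Hf.
Qed.

Variables (Phi : R -> R) (rho : R).
Hypothesis Hrho : 0 < rho.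
Hypothesis HPhi1 : forall y, Rabs y <= rho -> Phi y = 1.
Hypothesis HPhi_refine : forall y, Phi y = g (y / 2) * Phi (y / 2).

(* Since [Phi = 1] near 0, near any [w] the refinement equation makes [Phi] a finite product. *)
Lemma Derive_refinable_eventually w :
  exists N0, forall N, (N0 <= N)%nat -> Derive Phi w = dyadic_prod_der g g' N w.
Proof.
  assert (HPhiN : forall N y, Phi y = dyadic_prod g N y * Phi (y / 2 ^ N)).
  { intros N y. induction N as [|N IH].
    - unfold dyadic_prod; simpl. rewrite Rmult_1_l. f_equal. field.
    - rewrite dyadic_prod_S, IH, HPhi_refine.
      replace (y / 2 ^ N / 2) with (y / 2 ^ S N) by (simpl; field; apply pow_nonzero; lra).
      ring. }
  destruct (nfloor_ex (Rabs w / rho)) as [N0 HN0].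
  { apply Rdiv_le_0_compat; [apply Rabs_pos | auto]. }
  exists N0. intros N HN.
  assert (Hlt : Rabs w < 2 ^ N * rho).
  { assert (H1 := pow2_ge_succ N). assert (INR N0 <= INR N) by (apply le_INR; auto).
    apply (Rmult_lt_reg_r (/ rho)); [apply Rinv_0_lt_compat; lra|].
    replace (2 ^ N * rho * / rho) with (2 ^ N) by (field; lra). unfold Rdiv in HN0. lra. }
  rewrite <- (is_derive_unique _ _ _ (is_derive_dyadic_prod g g' Hg N w)).
  apply Derive_ext_loc.
  eapply filter_imp; [|exact (locally_Rabs_lt w _ Hlt)].
  intros y Hy. rewrite (HPhiN N y), HPhi1; [ring|].
  rewrite Rabs_div_pow2. assert (H1 := pow2_pos N).
  apply (Rmult_le_reg_r (2 ^ N)); auto. unfold Rdiv.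
  rewrite Rmult_assoc, Rinv_l by lra. lra.
Qed.

Lemma Rabs_Derive_dyadic_limit_sub_le w R0 : Rabs w <= R0 ->
  Rabs (Derive (fun w => real (Lim_seq (fun N => dyadic_prod f N w))) w - Derive Phi w)
  <= exp (B * R0) * dyadic_der_error R0.
Proof.
  intros Hw.
  assert (HG : 0 <= G) by (eapply Rle_trans; [apply Rabs_pos | apply (Hg'b 0)]).
  destruct (is_derive_dyadic_limit w) as [Hder Hlim].
  replace (Derive (fun w => real (Lim_seq (fun N => dyadic_prod f N w))) w)
    with (real (Lim_seq (fun N => dyadic_prod_der f f' N w)))
    by (symmetry; apply is_derive_unique, Hder).
  set (l := real (Lim_seq (fun N => dyadic_prod_der f f' N w))) in *.
  destruct (Derive_refinable_eventually w) as [N0 HN0].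
  apply Rle_plus_epsilon. intros e He.
  apply is_lim_seq_spec in Hlim. destruct (Hlim (mkposreal e He)) as [N1 HN1].
  set (N := max N0 N1).
  assert (H1 := HN1 N (Nat.le_max_r _ _)). simpl in H1.
  rewrite (HN0 N (Nat.le_max_l _ _)).
  replace (l - dyadic_prod_der g g' N w)
    with ((l - dyadic_prod_der f f' N w) + (dyadic_prod_der f f' N w - dyadic_prod_der g g' N w))
    by ring.
  eapply Rle_trans; [apply Rabs_triang|].
  rewrite <- Rabs_Ropp, Ropp_minus_distr in H1.
  assert (H2 := Rabs_dyadic_prod_der_sub_le w N).
  assert (H3 := exp_dyadic_der_error_le (Rabs w) R0 HG (conj (Rabs_pos w) Hw)).
  lra.
Qed.

End DyadicComparison.

Lemma IZR_between_2 (m : Z) : -2 < IZR m < 2 -> m = (-1)%Z \/ m = 0%Z \/ m = 1%Z.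
Proof.
  intros [H1 H2]. apply lt_IZR in H1. apply lt_IZR in H2. lia.
Qed.

Lemma IZR_between_1 (m : Z) : -1 < IZR m < 1 -> m = 0%Z.
Proof.
  intros [H1 H2]. apply lt_IZR in H1. apply lt_IZR in H2. lia.
Qed.

Lemma red2pi_range x : - PI <= red2pi x < PI.
Proof.
  unfold red2pi. set (z := (x - PI) / (2 * PI)).
  destruct (archimed z) as [H1 H2].
  assert (HP := PI_gt3).
  assert (Hz : 2 * PI * z = x - PI) by (unfold z; field; lra).
  split.
  - assert (2 * PI * IZR (up z) <= 2 * PI * (z + 1)) by (apply Rmult_le_compat_l; lra).
    nra.
  - assert (2 * PI * z < 2 * PI * IZR (up z)) by (apply Rmult_lt_compat_l; lra).
    nra.
Qed.

Lemma red2pi_unique x u (m : Z) : - PI <= u < PI -> u = x - 2 * PI * IZR m -> red2pi x = u.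
Proof.
  intros Hu Hm. assert (Hr := red2pi_range x). unfold red2pi in *.
  set (n := up ((x - PI) / (2 * PI))) in *.
  assert (HP := PI_gt3).
  assert (Hd : - 1 < IZR (m - n) < 1).
  { rewrite minus_IZR. subst u.
    split; apply (Rmult_lt_reg_l (2 * PI)); nra. }
  apply IZR_between_1 in Hd. assert (m = n) by lia. subst. reflexivity.
Qed.

Lemma red2pi_shift x (n : Z) : red2pi (x + 2 * PI * IZR n) = red2pi x.
Proof.
  apply red2pi_unique with (up ((x - PI) / (2 * PI)) + n)%Z; [apply red2pi_range|].
  unfold red2pi. rewrite plus_IZR. ring.
Qed.

Lemma red2pi_id x : - PI <= x < PI -> red2pi x = x.
Proof. intros H. apply red2pi_unique with 0%Z; auto. simpl. ring. Qed.

Lemma red2pi_PI : red2pi PI = - PI.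
Proof. apply red2pi_unique with 1%Z; [assert (HP := PI_gt3); lra | simpl; ring]. Qed.

Lemma red2pi_near x y : Rabs (y - x) < PI ->
  exists k : Z, (k = (-1)%Z \/ k = 0%Z \/ k = 1%Z)
                /\ red2pi y = red2pi x + (y - x) + 2 * PI * IZR k.
Proof.
  intros Hxy.
  assert (Hx := red2pi_range x). assert (Hy := red2pi_range y).
  unfold red2pi in *.
  set (nx := up ((x - PI) / (2 * PI))) in *.
  set (ny := up ((y - PI) / (2 * PI))) in *.
  exists (nx - ny)%Z. split.
  - apply IZR_between_2. rewrite minus_IZR. assert (HP := PI_gt3).
    apply Rabs_def2 in Hxy.
    split; apply (Rmult_lt_reg_l (2 * PI)); nra.
  - rewrite minus_IZR. ring.
Qed.

Lemma periodic_nat (F : R -> R) : (forall x, F (x + 2 * PI) = F x) ->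
  forall (k : nat) x, F (x + 2 * PI * INR k) = F x.
Proof.
  intros H k. induction k as [|k IH]; intros x.
  - simpl. f_equal. ring.
  - rewrite S_INR, <- (IH x), <- (H (x + 2 * PI * INR k)). f_equal. ring.
Qed.

Lemma periodic_Z (F : R -> R) : (forall x, F (x + 2 * PI) = F x) ->
  forall (n : Z) x, F (x + 2 * PI * IZR n) = F x.
Proof.
  intros H n x. destruct (Z.le_gt_cases 0 n) as [Hn|Hn].
  - rewrite <- (Z2Nat.id n), <- INR_IZR_INZ by lia. apply periodic_nat, H.
  - set (k := Z.to_nat (- n)).
    assert (Hk : IZR n = - INR k).
    { unfold k. rewrite INR_IZR_INZ, Z2Nat.id, opp_IZR by lia. ring. }
    rewrite Hk, <- (periodic_nat F H k (x + 2 * PI * - INR k)). f_equal. ring.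
Qed.

Lemma periodic_red2pi (F : R -> R) : (forall x, F (x + 2 * PI) = F x) ->
  forall x, F x = F (red2pi x).
Proof.
  intros H x. unfold red2pi. set (n := up ((x - PI) / (2 * PI))).
  rewrite <- (periodic_Z F H n (x - 2 * PI * IZR n)). f_equal. ring.
Qed.

Definition cos_half_pow (l : nat) (y : R) : R := cos (y / 2) ^ (2 * l).
Definition cos_half_pow_der (l : nat) (y : R) : R :=
  - INR l * cos (y / 2) ^ (2 * l - 1) * sin (y / 2).

Lemma is_derive_cos_half_pow l y : is_derive (cos_half_pow l) y (cos_half_pow_der l y).
Proof.
  unfold cos_half_pow, cos_half_pow_der. auto_derive; [auto|].
  replace (l + (l + 0))%nat with (2 * l)%nat by lia.
  rewrite Nat.sub_1_r, mult_INR. simpl INR. unfold Rdiv. field.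
Qed.

Lemma continuous_cos_half_pow l y : continuous (cos_half_pow l) y.
Proof. apply ex_derive_continuous_R. eexists; apply is_derive_cos_half_pow. Qed.

Lemma continuous_cos_half_pow_der l y : continuous (cos_half_pow_der l) y.
Proof. apply ex_derive_continuous_R. unfold cos_half_pow_der. auto_derive. auto. Qed.

Lemma Rabs_cos_half_pow_le l y : Rabs (cos_half_pow l y) <= 1.
Proof.
  unfold cos_half_pow. rewrite <- RPow_abs, <- (pow1 (2 * l)).
  apply pow_incr. split; [apply Rabs_pos | apply Rabs_le, COS_bound].
Qed.

Lemma Rabs_cos_half_pow_der_le l y : Rabs (cos_half_pow_der l y) <= INR l.
Proof.
  unfold cos_half_pow_der. rewrite !Rabs_mult, Rabs_Ropp, Rabs_pos_eq, <- RPow_abs by apply pos_INR.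
  assert (H1 : Rabs (cos (y / 2)) ^ (2 * l - 1) <= 1).
  { rewrite <- (pow1 (2 * l - 1)). apply pow_incr.
    split; [apply Rabs_pos | apply Rabs_le, COS_bound]. }
  assert (H2 : Rabs (sin (y / 2)) <= 1) by apply Rabs_le, SIN_bound.
  assert (H3 : 0 <= Rabs (cos (y / 2)) ^ (2 * l - 1)) by (apply pow_le, Rabs_pos).
  assert (H4 := pos_INR l).
  rewrite <- (Rmult_1_r (INR l)) at 2. rewrite <- (Rmult_1_r (INR l * 1)).
  apply Rmult_le_compat; auto using Rabs_pos; [nra|].
  apply Rmult_le_compat_l; auto.
Qed.

Lemma cos_half_pow_shift l x : cos_half_pow l (x + 2 * PI) = cos_half_pow l x.
Proof.
  unfold cos_half_pow. replace ((x + 2 * PI) / 2) with (x / 2 + PI) by field.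
  rewrite neg_cos, !pow_mult. f_equal. ring.
Qed.

Lemma cos_half_pow_eq_0_red2pi l x : cos_half_pow l x = 0 -> red2pi x = - PI.
Proof.
  intros H. assert (Hc : cos (x / 2) = 0).
  { destruct (Req_dec (cos (x / 2)) 0) as [|Hc]; auto. exfalso. exact (pow_nonzero _ (2 * l) Hc H). }
  apply cos_eq_0_0 in Hc. destruct Hc as [k Hk].
  apply red2pi_unique with (k + 1)%Z; [assert (HP := PI_gt3); lra|].
  rewrite plus_IZR. replace x with (2 * (x / 2)) by field. rewrite Hk. simpl. field.
Qed.

Lemma sum1_ext (g1 g2 : nat -> R) n : (forall k, g1 k = g2 k) -> sum1 g1 n = sum1 g2 n.
Proof. intros H. induction n as [|n IH]; simpl; [auto|]. rewrite IH, H. auto. Qed.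

Lemma is_derive_sum1 (g g' : nat -> R -> R) n w :
  (forall k x, is_derive (g k) x (g' k x)) ->
  is_derive (fun x => sum1 (fun k => g k x) n) w (sum1 (fun k => g' k w) n).
Proof.
  intros H. induction n as [|n IH]; simpl; [apply is_derive_cst|].
  apply (is_derive_plus (fun x => sum1 (fun k => g k x) n) (g (S n))); auto.
Qed.

Definition dusum (lam : nat -> nat -> R) (n : nat) (f : R -> R) (w : R) : R :=
  sum1 (fun k => lam n k * (fourier_a f k * (- (INR k * sin (INR k * w)))
                            + fourier_b f k * (INR k * cos (INR k * w)))) n.

Lemma is_derive_usum lam n f w : is_derive (usum lam n f) w (dusum lam n f w).
Proof.
  unfold usum, dusum. rewrite <- Rplus_0_l.
  apply (is_derive_plus (fun _ => fourier_a f 0 / 2)); [apply is_derive_cst|].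
  apply (is_derive_sum1
    (fun k x => lam n k * (fourier_a f k * cos (INR k * x) + fourier_b f k * sin (INR k * x)))
    (fun k x => lam n k * (fourier_a f k * (- (INR k * sin (INR k * x)))
                           + fourier_b f k * (INR k * cos (INR k * x))))).
  intros k x. auto_derive; [auto | ring].
Qed.

Lemma continuous_usum lam n f w : continuous (usum lam n f) w.
Proof. apply ex_derive_continuous_R. eexists. apply is_derive_usum. Qed.

Lemma continuous_dusum lam n f w : continuous (dusum lam n f) w.
Proof.
  apply ex_derive_continuous_R. unfold dusum. eexists.
  apply (is_derive_sum1 (fun k w => lam n k * (fourier_a f k * (- (INR k * sin (INR k * w)))
                                + fourier_b f k * (INR k * cos (INR k * w)))) (fun k w => lam n k * (fourier_a f k * (- (INR k * (INR k * cos (INR k * w))))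
                                + fourier_b f k * (INR k * (- (INR k * sin (INR k * w))))))).
  intros k x. auto_derive; [auto | ring].
Qed.

Lemma cos_sin_shift k x :
  cos (INR k * (x + 2 * PI)) = cos (INR k * x) /\ sin (INR k * (x + 2 * PI)) = sin (INR k * x).
Proof.
  replace (INR k * (x + 2 * PI)) with (INR k * x + 2 * INR k * PI) by ring.
  split; [apply cos_period | apply sin_period].
Qed.

Lemma usum_shift lam n f x : usum lam n f (x + 2 * PI) = usum lam n f x.
Proof.
  unfold usum. f_equal. apply sum1_ext. intros k.
  destruct (cos_sin_shift k x) as [H1 H2]. rewrite H1, H2. auto.
Qed.

Lemma dusum_shift lam n f x : dusum lam n f (x + 2 * PI) = dusum lam n f x.
Proof.
  apply sum1_ext. intros k.
  destruct (cos_sin_shift k x) as [H1 H2]. rewrite H1, H2. auto.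
Qed.

Lemma ex_RInt_continuous_R (f : R -> R) a b : (forall z, continuous f z) -> ex_RInt f a b.
Proof. intros H. apply (ex_RInt_continuous (V:=R_CompleteNormedModule)). intros; auto. Qed.

Lemma RInt_scal_R (f : R -> R) (c a b : R) : ex_RInt f a b ->
  RInt (fun t => c * f t) a b = c * RInt f a b.
Proof. intros H. apply (RInt_scal (V:=R_CompleteNormedModule) f a b c H). Qed.

Lemma RInt_parts (F F' g g' : R -> R) a b :
  (forall x, is_derive F x (F' x)) -> (forall x, continuous F' x) ->
  (forall x, is_derive g x (g' x)) -> (forall x, continuous g' x) ->
  RInt (fun t => F' t * g t) a b = F b * g b - F a * g a - RInt (fun t => F t * g' t) a b.
Proof.
  intros HF HF' Hg Hg'.
  assert (Hc : forall x, continuous F x) by (intros; apply ex_derive_continuous_R; eexists; eauto).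
  assert (Hgc : forall x, continuous g x) by (intros; apply ex_derive_continuous_R; eexists; eauto).
  assert (H1 : ex_RInt (fun t => F' t * g t) a b).
  { apply ex_RInt_continuous_R. intros; apply continuous_Rmult; auto. }
  assert (H2 : ex_RInt (fun t => F t * g' t) a b).
  { apply ex_RInt_continuous_R. intros; apply continuous_Rmult; auto. }
  assert (Hsum := is_RInt_plus _ _ _ _ _ _ (RInt_correct _ _ _ H1) (RInt_correct _ _ _ H2)).
  assert (Hftc : is_RInt (fun t => F' t * g t + F t * g' t) a b (minus (F b * g b) (F a * g a))).
  { apply (is_RInt_derive (fun t => F t * g t)).
    - intros x _. apply (is_derive_mult F g x); auto. intros; apply Rmult_comm.
    - intros x _. apply continuous_Rplus; apply continuous_Rmult; auto. }
  assert (H := is_RInt_unique _ _ _ _ Hsum).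
  assert (H' := is_RInt_unique _ _ _ _ Hftc).
  unfold plus, minus, opp in H, H'; simpl in H, H'. rewrite H' in H.
  unfold plus in H; simpl in H. lra.
Qed.

(* The boundary terms of the integration by parts vanish, so the Fourier coefficients of [M']
   are those of [M] multiplied by [k] and rotated. *)
Section FourierDerivative.
Variable M : R -> R.
Hypothesis HM : forall x, is_derive M x (Derive M x).
Hypothesis HM'c : forall x, continuous (Derive M) x.
Hypothesis HM_PI : M PI = 0.
Hypothesis HM_opp_PI : M (- PI) = 0.

Let HMc x : continuous M x.
Proof. apply ex_derive_continuous_R. eexists; eauto. Qed.

Lemma fourier_a_Derive k : fourier_a (Derive M) k = INR k * fourier_b M k.
Proof.
  unfold fourier_a, fourier_b.
  rewrite (RInt_parts M (Derive M) (fun t => cos (INR k * t)) (fun t => - (INR k * sin (INR k * t))));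
    auto.
  - rewrite HM_PI, HM_opp_PI.
    rewrite (RInt_ext (V:=R_CompleteNormedModule) _ (fun t => - INR k * (M t * sin (INR k * t))))
      by (intros; simpl; ring).
    rewrite RInt_scal_R; [ring|].
    apply ex_RInt_continuous_R. intros; apply continuous_Rmult; [apply HMc|].
    apply ex_derive_continuous_R; auto_derive; auto.
  - intros x. auto_derive; [auto | ring].
  - intros x. apply ex_derive_continuous_R; auto_derive; auto.
Qed.

Lemma fourier_b_Derive k : fourier_b (Derive M) k = - INR k * fourier_a M k.
Proof.
  unfold fourier_a, fourier_b.
  rewrite (RInt_parts M (Derive M) (fun t => sin (INR k * t)) (fun t => INR k * cos (INR k * t)));
    auto.
  - rewrite HM_PI, HM_opp_PI.
    rewrite (RInt_ext (V:=R_CompleteNormedModule) _ (fun t => INR k * (M t * cos (INR k * t))))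
      by (intros; simpl; ring).
    rewrite RInt_scal_R; [ring|].
    apply ex_RInt_continuous_R. intros; apply continuous_Rmult; [apply HMc|].
    apply ex_derive_continuous_R; auto_derive; auto.
  - intros x. auto_derive; [auto | ring].
  - intros x. apply ex_derive_continuous_R; auto_derive; auto.
Qed.

Lemma usum_Derive lam n w : usum lam n (Derive M) w = dusum lam n M w.
Proof.
  unfold usum, dusum. rewrite fourier_a_Derive. simpl INR.
  replace (0 * fourier_b M 0 / 2) with 0 by field. rewrite Rplus_0_l.
  apply sum1_ext. intros k. rewrite fourier_a_Derive, fourier_b_Derive. ring.
Qed.
End FourierDerivative.

Lemma Rabs_le_supnorm (F : R -> R) a b x : (forall y, continuous F y) -> a <= x <= b ->
  Rabs (F x) <= supnorm a b F.
Proof.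
  intros Hc Hx.
  destruct (continuity_ab_maj (fun y => Rabs (F y)) a b) as [Mx [HM _]]; [lra|..].
  { intros c _. apply continuity_pt_filterlim, continuous_Rabs_comp, Hc. }
  unfold supnorm.
  destruct (Lub_Rbar_correct (fun y => exists x, a <= x <= b /\ y = Rabs (F x))) as [Hub Hl].
  set (l := Lub_Rbar _) in *.
  assert (H1 : Rbar_le (Rabs (F x)) l) by (apply Hub; exists x; auto).
  assert (H2 : Rbar_le l (Rabs (F Mx))).
  { apply Hl. intros y [z [Hz ->]]. simpl. apply HM; auto. }
  destruct l as [r| |]; simpl in *; tauto.
Qed.

Definition meyer_slope (w0 : R) : R := PI / (3 * (PI - 2 * w0)).
Definition meyer_profile (theta : R -> R) (w0 t : R) : R :=
  cos (PI / 4 + theta (meyer_slope w0 * (t - PI))).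
Definition meyer_profile_der (theta : R -> R) (w0 t : R) : R :=
  - sin (PI / 4 + theta (meyer_slope w0 * (t - PI)))
  * (Derive theta (meyer_slope w0 * (t - PI)) * meyer_slope w0).

Lemma mM_shift theta w0 x : mM theta w0 (x + 2 * PI) = mM theta w0 x.
Proof.
  unfold mM. do 2 f_equal.
  replace (x + 2 * PI) with (x + 2 * PI * IZR 1) by (simpl; ring). apply red2pi_shift.
Qed.

Lemma mMl_shift theta w0 l x : mMl theta w0 l (x + 2 * PI) = mMl theta w0 l x.
Proof. unfold mMl. rewrite mM_shift. fold (cos_half_pow l (x + 2 * PI)).
  rewrite cos_half_pow_shift. reflexivity. Qed.

Section MeyerScaling.
Variables (theta : R -> R) (w0 : R).
Hypothesis theta_odd : forall x, theta (- x) = - theta x.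
Hypothesis theta_d1 : forall x, ex_derive theta x.
Hypothesis theta_d2 : forall x, ex_derive (Derive theta) x.
Hypothesis theta_const : forall x, PI / 3 < x -> theta x = PI / 4.
Hypothesis w0_range : PI / 3 <= w0 < PI / 2.

Lemma Derive_theta_continuous x : continuous (Derive theta) x.
Proof. apply ex_derive_continuous_R, theta_d2. Qed.

Lemma theta_eq_PI4 x : PI / 3 <= x -> theta x = PI / 4.
Proof.
  intros [H|<-]; auto.
  apply continuous_eq_right_const; auto. apply ex_derive_continuous_R, theta_d1.
Qed.

Lemma theta_eq_opp_PI4 x : x <= - (PI / 3) -> theta x = - (PI / 4).
Proof. intros H. rewrite <- (Ropp_involutive x), theta_odd, theta_eq_PI4; lra. Qed.

Lemma Derive_theta_eq_0 x : PI / 3 < Rabs x -> Derive theta x = 0.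
Proof.
  intros H. apply is_derive_unique.
  unfold Rabs in H. destruct Rcase_abs in H.
  - apply (is_derive_ext_loc (fun _ => - (PI / 4))); [|apply is_derive_cst].
    eapply filter_imp; [|apply (locally_lt (- (PI / 3)) x); lra].
    intros y Hy. rewrite theta_eq_opp_PI4; lra.
  - apply (is_derive_ext_loc (fun _ => PI / 4)); [|apply is_derive_cst].
    eapply filter_imp; [|apply (locally_gt (PI / 3) x); lra].
    intros y Hy. rewrite theta_eq_PI4; lra.
Qed.

Lemma Derive_theta_bounded : exists T, forall x, Rabs (Derive theta x) <= T.
Proof.
  destruct (continuity_ab_maj (fun x => Rabs (Derive theta x)) (-2) 2) as [Mx [HM _]]; [lra|..].
  { intros c _. apply continuity_pt_filterlim, continuous_Rabs_comp, Derive_theta_continuous. }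
  exists (Rabs (Derive theta Mx)). intros x. destruct (Rle_dec (Rabs x) 2) as [Hx|Hx].
  - apply HM. unfold Rabs in Hx; destruct Rcase_abs in Hx; lra.
  - rewrite Derive_theta_eq_0, Rabs_R0; [apply Rabs_pos|].
    assert (H := PI_4). lra.
Qed.

Lemma meyer_slope_pos : 0 < meyer_slope w0.
Proof. unfold meyer_slope. assert (H := PI_gt3). apply Rdiv_lt_0_compat; lra. Qed.

Lemma meyer_profile_eq_1 t : t <= 2 * w0 -> meyer_profile theta w0 t = 1.
Proof.
  intros H. unfold meyer_profile. rewrite theta_eq_opp_PI4.
  - replace (PI / 4 + - (PI / 4)) with 0 by ring. apply cos_0.
  - replace (- (PI / 3)) with (meyer_slope w0 * (2 * w0 - PI)) by (unfold meyer_slope; field; lra).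
    apply Rmult_le_compat_l; [left; apply meyer_slope_pos | lra].
Qed.

Lemma meyer_profile_eq_0 t : 2 * PI - 2 * w0 <= t -> meyer_profile theta w0 t = 0.
Proof.
  intros H. unfold meyer_profile. rewrite theta_eq_PI4.
  - replace (PI / 4 + PI / 4) with (PI / 2) by field. apply cos_PI2.
  - replace (PI / 3) with (meyer_slope w0 * (2 * PI - 2 * w0 - PI))
      by (unfold meyer_slope; field; lra).
    apply Rmult_le_compat_l; [left; apply meyer_slope_pos | lra].
Qed.

Lemma phiM_profile x : phiM theta w0 x = meyer_profile theta w0 (Rabs x).
Proof.
  unfold phiM. destruct Rle_dec; [rewrite meyer_profile_eq_1; auto|].
  destruct Rle_dec; [reflexivity|]. rewrite meyer_profile_eq_0; lra.
Qed.

Lemma Rabs_phiM_le x : Rabs (phiM theta w0 x) <= 1.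
Proof. rewrite phiM_profile. apply Rabs_le, COS_bound. Qed.

Lemma phiM_eq_1 x : Rabs x <= 2 * w0 -> phiM theta w0 x = 1.
Proof. intros H. rewrite phiM_profile. apply meyer_profile_eq_1, H. Qed.

Lemma phiM_eq_0 x : 2 * PI - 2 * w0 <= Rabs x -> phiM theta w0 x = 0.
Proof. intros H. rewrite phiM_profile. apply meyer_profile_eq_0, H. Qed.

Lemma phiM_eq_0_outside x : 2 * PI - 2 * w0 <= x \/ x <= - (2 * PI - 2 * w0) -> phiM theta w0 x = 0.
Proof. intros H. apply phiM_eq_0. unfold Rabs; destruct Rcase_abs; lra. Qed.

Lemma is_derive_meyer_profile t :
  is_derive (meyer_profile theta w0) t (meyer_profile_der theta w0 t).
Proof.
  unfold meyer_profile, meyer_profile_der. auto_derive; [apply theta_d1|].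
  change (fun x : R => theta x) with theta. unfold Rminus. ring.
Qed.

Lemma continuous_meyer_profile_der t : continuous (meyer_profile_der theta w0) t.
Proof.
  unfold meyer_profile_der. apply continuous_Rmult.
  - apply ex_derive_continuous_R. auto_derive. apply theta_d1.
  - apply continuous_Rmult; [|apply continuous_Rconst].
    apply (continuous_Rcomp (fun t => meyer_slope w0 * (t - PI)) (Derive theta));
      [apply ex_derive_continuous_R; auto_derive; auto | apply Derive_theta_continuous].
Qed.

Variable T : R.
Hypothesis HT : forall x, Rabs (Derive theta x) <= T.

Lemma Rabs_meyer_profile_der_le t : Rabs (meyer_profile_der theta w0 t) <= T * meyer_slope w0.
Proof.
  assert (Hs := meyer_slope_pos).
  unfold meyer_profile_der. rewrite !Rabs_mult, Rabs_Ropp, (Rabs_pos_eq (meyer_slope w0)) by lra.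
  assert (H1 : Rabs (sin (PI / 4 + theta (meyer_slope w0 * (t - PI)))) <= 1)
    by apply Rabs_le, SIN_bound.
  assert (H2 := HT (meyer_slope w0 * (t - PI))).
  rewrite <- (Rmult_1_l (T * meyer_slope w0)).
  apply Rmult_le_compat; auto using Rabs_pos.
  - apply Rmult_le_pos; [apply Rabs_pos | lra].
  - apply Rmult_le_compat_r; lra.
Qed.

Lemma phiM_C1 x :
  is_derive (phiM theta w0) x (Derive (phiM theta w0) x)
  /\ continuous (Derive (phiM theta w0)) x
  /\ Rabs (Derive (phiM theta w0) x) <= T * meyer_slope w0.
Proof.
  assert (HTs : 0 <= T * meyer_slope w0)
    by (eapply Rle_trans; [apply Rabs_pos | apply (Rabs_meyer_profile_der_le 0)]).
  destruct (Rtotal_order x 0) as [Hx|[->|Hx]].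
  - destruct (is_derive_locally_eq (phiM theta w0) (fun y => meyer_profile theta w0 (- y))
                (fun y => - meyer_profile_der theta w0 (- y)) x) as [H1 [H2 H3]].
    + eapply filter_imp; [|apply (locally_lt 0 x Hx)].
      intros y Hy. rewrite phiM_profile, Rabs_left; auto.
    + apply filter_forall. intros y.
      replace (- meyer_profile_der theta w0 (- y)) with (scal (-1) (meyer_profile_der theta w0 (- y)))
        by (unfold scal; simpl; unfold mult; simpl; ring).
      apply (is_derive_comp (meyer_profile theta w0) (fun y => - y));
        [apply is_derive_meyer_profile | auto_derive; auto].
    + apply (continuous_Rcomp (fun y => - y) (fun z => - meyer_profile_der theta w0 z));
        [apply ex_derive_continuous_R; auto_derive; auto|].
      apply (continuous_opp (meyer_profile_der theta w0)), continuous_meyer_profile_der.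
    + apply locally_singleton in H3. rewrite H3.
      split; [|split]; auto. rewrite Rabs_Ropp. apply Rabs_meyer_profile_der_le.
  - destruct (is_derive_locally_eq (phiM theta w0) (fun _ => 1) (fun _ => 0) 0) as [H1 [H2 H3]].
    + assert (Hw : 0 < 2 * w0) by (assert (H := PI_gt3); lra).
      eapply filter_imp; [|apply (locally_dist_lt 0 (2 * w0) Hw)].
      intros y Hy. apply phiM_eq_1. replace y with (y - 0) by ring. lra.
    + apply filter_forall. intros y. apply is_derive_cst.
    + apply continuous_Rconst.
    + apply locally_singleton in H3. rewrite H3, Rabs_R0. auto.
  - destruct (is_derive_locally_eq (phiM theta w0) (meyer_profile theta w0)
                (meyer_profile_der theta w0) x) as [H1 [H2 H3]].
    + eapply filter_imp; [|apply (locally_gt 0 x Hx)].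
      intros y Hy. rewrite phiM_profile, Rabs_right; auto. lra.
    + apply filter_forall. intros y. apply is_derive_meyer_profile.
    + apply continuous_meyer_profile_der.
    + apply locally_singleton in H3. rewrite H3.
      split; [|split]; auto. apply Rabs_meyer_profile_der_le.
Qed.

Lemma w0_pos : 0 < w0.
Proof. assert (H := PI_gt3). lra. Qed.

(* Near any point the reduction modulo [2 pi] is a translation, except across the jump at [pi]
   where [phiM (2 .)] vanishes on both sides. *)
Lemma mM_near x y :
  Rabs (y - x) < w0 / 2 -> mM theta w0 y = phiM theta w0 (2 * (red2pi x + (y - x))).
Proof.
  intros Hxy. assert (HP := PI_gt3). assert (Hw := w0_pos).
  destruct (red2pi_near x y) as [k [Hk Hr]].
  { apply Rabs_def2 in Hxy. apply Rabs_def1; lra. }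
  unfold mM. rewrite Hr.
  assert (Hx := red2pi_range x). assert (Hy := red2pi_range y).
  apply Rabs_def2 in Hxy. rewrite Hr in Hy.
  destruct Hk as [ -> | [ -> | -> ] ]; simpl IZR in *.
  - rewrite !phiM_eq_0_outside; [auto | lra | lra].
  - f_equal. ring.
  - rewrite !phiM_eq_0_outside; [auto | lra | lra].
Qed.

Lemma mM_C1 x : is_derive (mM theta w0) x (Derive (mM theta w0) x)
  /\ continuous (Derive (mM theta w0)) x
  /\ Rabs (Derive (mM theta w0) x) <= 2 * (T * meyer_slope w0).
Proof.
  set (r := red2pi x).
  destruct (is_derive_locally_eq (mM theta w0) (fun y => phiM theta w0 (2 * (r + (y - x))))
              (fun y => 2 * Derive (phiM theta w0) (2 * (r + (y - x)))) x) as [H1 [H2 H3]].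
  - assert (Hw : 0 < w0 / 2) by (assert (H := w0_pos); lra).
    eapply filter_imp; [|apply (locally_dist_lt x _ Hw)]. intros y Hy. apply mM_near, Hy.
  - apply filter_forall. intros y.
    replace (2 * Derive (phiM theta w0) (2 * (r + (y - x))))
      with (scal 2 (Derive (phiM theta w0) (2 * (r + (y - x)))))
      by (unfold scal; simpl; unfold mult; simpl; ring).
    apply (is_derive_comp (phiM theta w0) (fun y => 2 * (r + (y - x)))); [apply phiM_C1|].
    auto_derive; [auto | ring].
  - apply continuous_Rmult; [apply continuous_Rconst|].
    apply (continuous_Rcomp (fun y => 2 * (r + (y - x))) (Derive (phiM theta w0)));
      [apply ex_derive_continuous_R; auto_derive; auto | apply phiM_C1].
  - apply locally_singleton in H3. rewrite H3. split; [|split]; auto.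
    rewrite Rabs_mult, Rabs_pos_eq by lra. apply Rmult_le_compat_l; [lra | apply phiM_C1].
Qed.

Lemma Rabs_mM_le x : Rabs (mM theta w0 x) <= 1.
Proof. apply Rabs_phiM_le. Qed.

Lemma mM_0 : mM theta w0 0 = 1.
Proof.
  assert (H := w0_pos). assert (HP := PI_gt3).
  unfold mM. rewrite red2pi_id by lra. apply phiM_eq_1. rewrite Rmult_0_r, Rabs_R0. lra.
Qed.

Lemma mM_eq_0_near x : red2pi x = - PI -> forall y, Rabs (y - x) < w0 / 2 -> mM theta w0 y = 0.
Proof.
  intros Hx y Hy. rewrite (mM_near x y Hy), Hx. apply phiM_eq_0_outside.
  apply Rabs_def2 in Hy. right. lra.
Qed.

Lemma phiM_refine y : phiM theta w0 y = mM theta w0 (y / 2) * phiM theta w0 (y / 2).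
Proof.
  assert (HP := PI_gt3). assert (Hw := w0_pos).
  destruct (Rle_dec (Rabs y) (2 * PI - 2 * w0)) as [Hy|Hy].
  - assert (Hz : Rabs (y / 2) <= PI - w0).
    { unfold Rdiv. rewrite Rabs_mult, (Rabs_pos_eq (/ 2)) by lra. lra. }
    unfold mM. rewrite red2pi_id.
    + replace (2 * (y / 2)) with y by field. rewrite (phiM_eq_1 (y / 2)); [ring | lra].
    + unfold Rabs in Hz; destruct Rcase_abs in Hz; lra.
  - rewrite (phiM_eq_0 y) by lra.
    destruct (Rle_dec (2 * PI - 2 * w0) (Rabs (y / 2))) as [Hz|Hz].
    + rewrite (phiM_eq_0 (y / 2)); auto. ring.
    + unfold mM. assert (Hr := red2pi_range (y / 2)). unfold red2pi in *.
      set (n := up ((y / 2 - PI) / (2 * PI))) in *.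
      assert (Hz2 : Rabs (y / 2) < 2 * PI - 2 * w0) by lra.
      apply Rabs_def2 in Hz2.
      assert (Hn : n = (-1)%Z \/ n = 0%Z \/ n = 1%Z).
      { apply IZR_between_2. split; apply (Rmult_lt_reg_l (2 * PI)); nra. }
      rewrite phiM_eq_0_outside; [ring|].
      destruct Hn as [Hn|[Hn|Hn]]; rewrite Hn in *; simpl IZR in *.
      * left. lra.
      * unfold Rabs in Hy. destruct Rcase_abs in Hy; lra.
      * right. lra.
Qed.

Lemma mM_eq_cos_half_pow_mMl l x : mM theta w0 x = cos_half_pow l x * mMl theta w0 l x.
Proof.
  unfold mMl. fold (cos_half_pow l x). destruct (Req_dec (cos_half_pow l x) 0) as [H|H].
  - rewrite H, Rmult_0_l. apply (mM_eq_0_near x (cos_half_pow_eq_0_red2pi l x H)).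
    rewrite Rminus_eq_0, Rabs_R0. assert (Hw := w0_pos). lra.
  - field. exact H.
Qed.

(* Where [cos (x/2)] vanishes, [mM] vanishes on a whole neighbourhood, so the quotient is [0] there. *)
Lemma mMl_C1 l x :
  is_derive (mMl theta w0 l) x (Derive (mMl theta w0 l) x) /\ continuous (Derive (mMl theta w0 l)) x.
Proof.
  assert (HmM := mM_C1).
  destruct (Req_dec (cos_half_pow l x) 0) as [H|H].
  - assert (Hr := cos_half_pow_eq_0_red2pi l x H).
    destruct (is_derive_locally_eq (mMl theta w0 l) (fun _ => 0) (fun _ => 0) x) as [H1 [H2 H3]].
    + assert (Hw : 0 < w0 / 2) by (assert (Hw := w0_pos); lra).
      eapply filter_imp; [|apply (locally_dist_lt x _ Hw)]. intros y Hy.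
      unfold mMl. rewrite (mM_eq_0_near x Hr y Hy). unfold Rdiv. ring.
    + apply filter_forall. intros y. apply is_derive_cst.
    + apply continuous_Rconst.
    + apply locally_singleton in H3. rewrite H3. auto.
  - destruct (is_derive_locally_eq (mMl theta w0 l) (mMl theta w0 l)
      (fun y => (Derive (mM theta w0) y * cos_half_pow l y - mM theta w0 y * cos_half_pow_der l y)
                / cos_half_pow l y ^ 2) x) as [H1 [H2 H3]].
    + apply filter_forall. auto.
    + eapply filter_imp;
        [|apply (locally_neq_0 (cos_half_pow l) x (continuous_cos_half_pow l x) H)].
      intros y Hy.
      apply (is_derive_div (mM theta w0) (cos_half_pow l) y); auto;
        [apply HmM | apply is_derive_cos_half_pow].
    + apply continuous_Rmult.
      * apply continuous_Rminus; apply continuous_Rmult;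
          auto using continuous_cos_half_pow, continuous_cos_half_pow_der; [apply HmM|].
        apply ex_derive_continuous_R. eexists. apply HmM.
      * apply continuous_Rinv_comp; [|apply pow_nonzero, H].
        apply ex_derive_continuous_R. unfold cos_half_pow. auto_derive. auto.
    + apply locally_singleton in H3. rewrite H3. auto.
Qed.

Lemma Derive_mMl_shift l x :
  Derive (mMl theta w0 l) (x + 2 * PI) = Derive (mMl theta w0 l) x.
Proof.
  symmetry. apply is_derive_unique.
  apply (is_derive_ext (fun y => mMl theta w0 l (y + 2 * PI))); [intros; apply mMl_shift|].
  rewrite <- (Rmult_1_l (Derive (mMl theta w0 l) (x + 2 * PI))).
  apply (is_derive_comp (mMl theta w0 l) (fun y => y + 2 * PI)); [apply mMl_C1|].
  auto_derive; auto.
Qed.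

Lemma mMl_0 l : mMl theta w0 l 0 = 1.
Proof.
  unfold mMl. rewrite mM_0. replace (0 / 2) with 0 by field. rewrite cos_0, pow1. field.
Qed.

Lemma mMl_PI l : mMl theta w0 l PI = 0.
Proof.
  assert (HP := PI_gt3).
  unfold mMl, mM. rewrite red2pi_PI, phiM_eq_0; [unfold Rdiv; ring|].
  rewrite Rabs_mult, Rabs_Ropp, !Rabs_pos_eq; lra.
Qed.

Lemma mMl_opp_PI l : mMl theta w0 l (- PI) = 0.
Proof. rewrite <- (mMl_PI l), <- mMl_shift. f_equal. ring. Qed.

Variables (lam : nat -> nat -> R) (nl : nat -> nat).

(* [alpha] and [gamma] are sup norms over one period; periodicity extends them to all [x]. *)
Lemma Rabs_u_l_sub_mMl_le l x :
  Rabs (u_l theta w0 lam nl l x - mMl theta w0 l x) <= alpha theta w0 lam nl l.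
Proof.
  rewrite (periodic_red2pi (fun x => u_l theta w0 lam nl l x - mMl theta w0 l x)).
  - apply (Rabs_le_supnorm (fun x => u_l theta w0 lam nl l x - mMl theta w0 l x)).
    + intros y. apply continuous_Rminus; [apply continuous_usum|].
      apply ex_derive_continuous_R. eexists. apply mMl_C1.
    + assert (H := red2pi_range x). lra.
  - intros y. unfold u_l. rewrite usum_shift, mMl_shift. reflexivity.
Qed.

Lemma u1_l_eq_dusum l x : u1_l theta w0 lam nl l x = dusum lam (nl l) (mMl theta w0 l) x.
Proof.
  apply usum_Derive; [apply mMl_C1 | apply mMl_C1 | apply mMl_PI | apply mMl_opp_PI].
Qed.

Lemma Rabs_dusum_sub_Derive_mMl_le l x :
  Rabs (dusum lam (nl l) (mMl theta w0 l) x - Derive (mMl theta w0 l) x)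
  <= gamma theta w0 lam nl l.
Proof.
  rewrite (periodic_red2pi (fun x => dusum lam (nl l) (mMl theta w0 l) x - Derive (mMl theta w0 l) x)).
  - rewrite <- u1_l_eq_dusum.
    apply (Rabs_le_supnorm (fun w => u1_l theta w0 lam nl l w - Derive (mMl theta w0 l) w)).
    + intros y. apply continuous_Rminus; [apply continuous_usum | apply mMl_C1].
    + assert (H := red2pi_range x). lra.
  - intros y. rewrite dusum_shift, Derive_mMl_shift. reflexivity.
Qed.

Lemma mu_nonneg l : 0 <= mu theta w0 lam nl l.
Proof.
  assert (H1 := Rle_trans _ _ _ (Rabs_pos _) (Rabs_u_l_sub_mMl_le l 0)).
  assert (H2 := Rle_trans _ _ _ (Rabs_pos _) (Rabs_dusum_sub_Derive_mMl_le l 0)).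
  assert (H3 := pos_INR l). unfold mu. nra.
Qed.

Definition m_l_der (l : nat) (y : R) : R :=
  (cos_half_pow_der l y * u_l theta w0 lam nl l y
   + cos_half_pow l y * dusum lam (nl l) (mMl theta w0 l) y) / u_l theta w0 lam nl l 0.

Lemma is_derive_m_l l x : is_derive (m_l theta w0 lam nl l) x (m_l_der l x).
Proof.
  unfold m_l_der, Rdiv.
  set (h := fun y => cos_half_pow l y * u_l theta w0 lam nl l y).
  apply (is_derive_ext (fun y => h y * / u_l theta w0 lam nl l 0)); [reflexivity|].
  match goal with |- is_derive _ _ ?d => replace d with (d + h x * 0) by ring end.
  apply (is_derive_mult h (fun _ => / u_l theta w0 lam nl l 0));
    [|apply is_derive_cst | intros; apply Rmult_comm].
  apply (is_derive_mult (cos_half_pow l)); [apply is_derive_cos_half_pow | apply is_derive_usum |].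
  intros; apply Rmult_comm.
Qed.

Lemma continuous_m_l_der l x : continuous (m_l_der l) x.
Proof.
  unfold m_l_der, Rdiv. apply continuous_Rmult; [|apply continuous_Rconst].
  apply continuous_Rplus; apply continuous_Rmult;
    [apply continuous_cos_half_pow_der | apply continuous_usum
    | apply continuous_cos_half_pow | apply continuous_dusum].
Qed.

Lemma m_l_0 l : u_l theta w0 lam nl l 0 <> 0 -> m_l theta w0 lam nl l 0 = 1.
Proof.
  intros Hu. unfold m_l. replace (0 / 2) with 0 by field. rewrite cos_0, pow1. field. exact Hu.
Qed.

Lemma Derive_mM_eq l x :
  Derive (mM theta w0) x
  = cos_half_pow_der l x * mMl theta w0 l x + cos_half_pow l x * Derive (mMl theta w0 l) x.
Proof.
  apply is_derive_unique.
  apply (is_derive_ext (fun y => cos_half_pow l y * mMl theta w0 l y));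
    [intros; symmetry; apply mM_eq_cos_half_pow_mMl|].
  apply (is_derive_mult (cos_half_pow l)); [apply is_derive_cos_half_pow | apply mMl_C1 |].
  intros; apply Rmult_comm.
Qed.

(* Differentiating [cos^(2l) (x/2) u_l / u_l(0)] costs the factor [l] in front of [alpha];
   the normalisation contributes [|1 - u_l(0)| <= alpha]. *)
Lemma Rabs_m_l_der_sub_le c l x : 0 < c -> (1 <= l)%nat -> c <= Rabs (u_l theta w0 lam nl l 0) ->
  Rabs (m_l_der l x - Derive (mM theta w0) x)
  <= (1 + 2 * (T * meyer_slope w0)) / c * mu theta w0 lam nl l.
Proof.
  intros Hc Hl Hu0.
  set (U := u_l theta w0 lam nl l). set (M := mMl theta w0 l).
  set (dU := dusum lam (nl l) M). set (c0 := U 0).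
  set (al := alpha theta w0 lam nl l). set (ga := gamma theta w0 lam nl l).
  set (G := 2 * (T * meyer_slope w0)).
  assert (Hal : Rabs (U x - M x) <= al) by apply Rabs_u_l_sub_mMl_le.
  assert (Hga : Rabs (dU x - Derive M x) <= ga) by apply Rabs_dusum_sub_Derive_mMl_le.
  assert (Hal0 : 0 <= al) by (eapply Rle_trans; [apply Rabs_pos | exact Hal]).
  assert (Hga0 : 0 <= ga) by (eapply Rle_trans; [apply Rabs_pos | exact Hga]).
  assert (HG : Rabs (Derive (mM theta w0) x) <= G) by apply mM_C1.
  assert (HG0 : 0 <= G) by (eapply Rle_trans; [apply Rabs_pos | exact HG]).
  assert (H1c0 : Rabs (1 - c0) <= al).
  { replace (1 - c0) with (- (U 0 - M 0)) by (unfold M; rewrite mMl_0; unfold c0; ring).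
    rewrite Rabs_Ropp. apply Rabs_u_l_sub_mMl_le. }
  assert (Hc0 : 0 < Rabs c0) by (unfold c0, U; lra).
  assert (Hl1 : 1 <= INR l) by (apply (le_INR 1); auto).
  assert (Hsplit : m_l_der l x - Derive (mM theta w0) x
    = (cos_half_pow_der l x * (U x - M x) + cos_half_pow l x * (dU x - Derive M x)
       + Derive (mM theta w0) x * (1 - c0)) / c0).
  { unfold m_l_der. rewrite (Derive_mM_eq l x). fold U M dU c0.
    field. intros H0. rewrite H0, Rabs_R0 in Hc0. lra. }
  assert (Hnum : Rabs (cos_half_pow_der l x * (U x - M x) + cos_half_pow l x * (dU x - Derive M x)
                       + Derive (mM theta w0) x * (1 - c0)) <= (1 + G) * mu theta w0 lam nl l).
  { eapply Rle_trans; [apply Rabs_triang|].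
    eapply Rle_trans; [apply Rplus_le_compat_r, Rabs_triang|]. rewrite !Rabs_mult.
    assert (A1 : Rabs (cos_half_pow_der l x) * Rabs (U x - M x) <= INR l * al)
      by (apply Rmult_le_compat; auto using Rabs_pos, Rabs_cos_half_pow_der_le).
    assert (A2 : Rabs (cos_half_pow l x) * Rabs (dU x - Derive M x) <= 1 * ga)
      by (apply Rmult_le_compat; auto using Rabs_pos, Rabs_cos_half_pow_le).
    assert (A3 : Rabs (Derive (mM theta w0) x) * Rabs (1 - c0) <= G * al)
      by (apply Rmult_le_compat; auto using Rabs_pos).
    assert (G * al <= G * (INR l * al)) by (apply Rmult_le_compat_l; nra).
    assert (0 <= G * ga) by (apply Rmult_le_pos; auto).
    unfold mu. fold al ga. nra. }
  rewrite Hsplit. unfold Rdiv at 1. rewrite Rabs_mult, Rabs_inv.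
  assert (Hinv : / Rabs c0 <= / c) by (apply Rinv_le_contravar; auto).
  assert (0 <= (1 + G) * mu theta w0 lam nl l) by (apply Rmult_le_pos; [lra | apply mu_nonneg]).
  replace ((1 + G) / c * mu theta w0 lam nl l) with ((1 + G) * mu theta w0 lam nl l * / c)
    by (unfold Rdiv; ring).
  apply Rmult_le_compat; auto using Rabs_pos. left; apply Rinv_0_lt_compat, Hc0.
Qed.

(* [mu(l) <= 1] keeps [|m_l'|] bounded uniformly in [l], as the product comparison requires. *)
Lemma Derive_phi_l_sub_phiM_O_mu c R0 : 0 < c -> exists K, forall l w,
  (1 <= l)%nat -> c <= Rabs (u_l theta w0 lam nl l 0) -> mu theta w0 lam nl l <= 1 -> Rabs w <= R0 ->
  Rabs (Derive (phi_l theta w0 lam nl l) w - Derive (phiM theta w0) w) <= K * mu theta w0 lam nl l.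
Proof.
  intros Hc.
  set (G := 2 * (T * meyer_slope w0)). set (kap := (1 + G) / c). set (B := G + kap).
  assert (HG : 0 <= G) by (eapply Rle_trans; [apply Rabs_pos | apply (mM_C1 0)]).
  assert (Hkap : 0 <= kap) by (apply Rdiv_le_0_compat; lra).
  exists (exp (B * R0) * (kap * (G * R0 + exp (B * R0) * R0 * B + 1))).
  intros l w Hl Hu0 Hmu Hw.
  assert (Hm0 := mu_nonneg l).
  assert (Hu0' : u_l theta w0 lam nl l 0 <> 0).
  { intros H0. rewrite H0, Rabs_R0 in Hu0. lra. }
  assert (Hfg : forall x, Rabs (m_l_der l x - Derive (mM theta w0) x) <= kap * mu theta w0 lam nl l)
    by (intros; apply Rabs_m_l_der_sub_le; auto).
  assert (Hf'b : forall x, Rabs (m_l_der l x) <= B).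
  { intros x. replace (m_l_der l x) with (Derive (mM theta w0) x + (m_l_der l x - Derive (mM theta w0) x))
      by ring.
    eapply Rle_trans; [apply Rabs_triang|]. apply Rplus_le_compat; [apply mM_C1|].
    eapply Rle_trans; [apply Hfg|]. rewrite <- (Rmult_1_r kap) at 2.
    apply Rmult_le_compat_l; auto. }
  assert (H := Rabs_Derive_dyadic_limit_sub_le (m_l theta w0 lam nl l) (m_l_der l)
    (mM theta w0) (Derive (mM theta w0)) B G (kap * mu theta w0 lam nl l)
    (is_derive_m_l l) Hf'b (m_l_0 l Hu0') (fun x => proj1 (mM_C1 x)) Rabs_mM_le
    (fun x => proj2 (proj2 (mM_C1 x))) mM_0 Hfg ltac:(unfold B; lra)
    ltac:(apply Rmult_le_pos; auto) (continuous_m_l_der l)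
    (phiM theta w0) (2 * w0) ltac:(assert (Hw0 := w0_pos); lra) phiM_eq_1 phiM_refine w R0 Hw).
  eapply Rle_trans; [exact H|]. right. unfold dyadic_der_error. ring.
Qed.

End MeyerScaling.

Theorem lemma8
  (theta : R -> R) (w0 : R) (lam : nat -> nat -> R) (nl : nat -> nat)
  (l0 : nat)
  (theta_odd : forall x, theta (- x) = - theta x)
  (theta_mono : forall x y, x <= y -> theta x <= theta y)
  (theta_d1 : forall x, ex_derive theta x)
  (theta_d2 : forall x, ex_derive (Derive theta) x)
  (theta_C2 : forall x, continuous (Derive (Derive theta)) x)
  (theta_const : forall x, PI / 3 < x -> theta x = PI / 4)
  (w0_range : PI / 3 <= w0 < PI / 2)
  (H_alpha : is_lim_seq (fun l => INR l * alpha theta w0 lam nl l) 0)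
  (H_gamma : is_lim_seq (gamma theta w0 lam nl) 0)
  (H_upi : forall l, u_l theta w0 lam nl l PI <> 0)
  (H_l0 : exists c, 0 < c /\
            forall l, (l0 <= l)%nat -> c <= Rabs (u_l theta w0 lam nl l 0)) :
  forall a b, a < b ->
  exists C, exists L, forall l, (l0 <= l)%nat -> (L <= l)%nat ->
    forall w, a <= w <= b ->
      Rabs (Derive (phi_l theta w0 lam nl l) w - Derive (phiM theta w0) w)
        <= C * mu theta w0 lam nl l.
Proof.
  intros a b _.
  destruct (Derive_theta_bounded theta theta_odd theta_d1 theta_d2 theta_const) as [T HT].
  destruct H_l0 as [c [Hc Hcl]].
  destruct (Derive_phi_l_sub_phiM_O_mu theta w0 theta_odd theta_d1 theta_d2 theta_const w0_range
              T HT lam nl c (Rmax (Rabs a) (Rabs b)) Hc) as [K HK].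
  apply is_lim_seq_spec in H_alpha, H_gamma.
  destruct (H_alpha (mkposreal (1 / 2) ltac:(lra))) as [L1 HL1].
  destruct (H_gamma (mkposreal (1 / 2) ltac:(lra))) as [L2 HL2].
  exists K, (max (max L1 L2) 1). intros l Hl0 HL w Hw.
  apply HK.
  - lia.
  - apply Hcl, Hl0.
  - assert (A1 := HL1 l ltac:(lia)). assert (A2 := HL2 l ltac:(lia)). simpl in A1, A2.
    rewrite Rminus_0_r in A1, A2. apply Rabs_def2 in A1. apply Rabs_def2 in A2.
    unfold mu. lra.
  - assert (Ha := Rle_abs (- a)). rewrite Rabs_Ropp in Ha. assert (Hb := Rle_abs b).
    assert (Hma := Rmax_l (Rabs a) (Rabs b)). assert (Hmb := Rmax_r (Rabs a) (Rabs b)).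
    apply Rabs_le. lra.
Qed.
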